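(* Let $\mathbf{k}$ be a perfect field and $L/\mathbf{k}$ a quadratic extension. Let $p=\{p_1,p_2,p_3\}$ and $q=\{q_1,q_2,q_3\}$ be points of degree $3$ in $\mathcal{Q}^L$ such that for any $h\in\operatorname{Gal}(\overline{\mathbf{k}}/\mathbf{k})$ there exists $\sigma\in\mathrm{Sym}_3$ with $p_i^h=p_{\sigma(i)}$ and $q_i^h=q_{\sigma(i)}$ for $i=1,2,3$. Suppose that the geometric components of $p$ (resp. of $q$) lie on pairwise distinct rulings of $\mathcal{Q}^L_L\simeq\mathbb{P}^1_L\times\mathbb{P}^1_L$. Then there exists $\alpha\in\operatorname{Aut}_{\mathbf{k}}(\mathcal{Q}^L)$ such that $\alpha(p_i)=q_i$ for $i=1,2,3$.
   Context: With $g$ the generator of $\operatorname{Gal}(L/\mathbf{k})$, $\mathcal{Q}^L$ is the $\mathbf{k}$-structure on $\mathbb{P}^1_L\times\mathbb{P}^1_L$ given by the Galois action $([u_0:u_1],[v_0:v_1])\mapsto([v_0^g:v_1^g],[u_0^g:u_1^g])$. A point of degree $3$ is a $\operatorname{Gal}(\overline{\mathbf{k}}/\mathbf{k})$-orbit $\{p_1,p_2,p_3\}$ of cardinality $3$ in $\mathcal{Q}^L(\overline{\mathbf{k}})$; ''pairwise distinct rulings'' means no two of the $p_i$ lie on a common fibre of either projection. *)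

From HB Require Import structures.
From mathcomp Require Import all_boot all_order all_algebra all_fingroup all_field.
From Stdlib Require Import ClassicalEpsilon.
Set Implicit Arguments. Unset Strict Implicit. Unset Printing Implicit Defensive.
Import GRing.Theory.
Local Open Scope ring_scope.

Definition perfect_field (F : fieldType) : Prop :=
  forall p : nat, p \in [pchar F] -> forall x : F, exists y : F, y ^+ p = x.

Definition algebraic_over (k : fieldType) (K : closedFieldType)
  (iota : {rmorphism k -> K}) : Prop :=
  forall x : K, exists P : {poly k}, P != 0 /\ root (map_poly iota P) x.

(* h is an element of Gal(kbar/k): a field automorphism of K fixing iota(k). *)
Definition is_gal (k : fieldType) (K : closedFieldType)
  (iota : {rmorphism k -> K}) (h : {rmorphism K -> K}) : Prop :=
  bijective h /\ forall c : k, h (iota c) = iota c.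

(* Points of P^1(K) in homogeneous coordinates: nonzero row vectors [u0 u1];
   two vectors give the same point iff they are proportional. *)
Definition p1eq (K : fieldType) (u v : 'rV[K]_2) : Prop :=
  exists2 c : K, c != 0 & v = c *: u.

(* Kbar-points of Q^L : pairs of points of P^1(K) (since Q^L_L = P^1_L x P^1_L). *)
Definition Qpt (K : fieldType) := ('rV[K]_2 * 'rV[K]_2)%type.

Definition Qvalid (K : fieldType) (p : Qpt K) : Prop := p.1 != 0 /\ p.2 != 0.

Definition Qeq (K : fieldType) (p q : Qpt K) : Prop :=
  p1eq p.1 q.1 /\ p1eq p.2 q.2.

(* Galois action of h on Q^L(kbar): coordinatewise action of h, composed with
   the swap of the two factors iff h restricts to the nontrivial element g of
   Gal(L/k) (i.e. iff h does not fix j(L) pointwise).  This is the action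
   induced by the descent datum ([u],[v]) |-> ([v^g],[u^g]). *)
Definition Qact (k : fieldType) (L : fieldExtType k) (K : closedFieldType)
  (j : {rmorphism L -> K}) (h : {rmorphism K -> K}) (p : Qpt K) : Qpt K :=
  if excluded_middle_informative (forall l : L, h (j l) = j l)
  then (map_mx h p.1, map_mx h p.2)
  else (map_mx h p.2, map_mx h p.1).

(* A point of degree 3 of Q^L: a triple of pairwise distinct kbar-points forming
   a single Gal(kbar/k)-orbit. *)
Definition deg3_point (k : fieldType) (L : fieldExtType k) (K : closedFieldType)
  (iota : {rmorphism k -> K}) (j : {rmorphism L -> K}) (p : 'I_3 -> Qpt K) : Prop :=
  [/\ forall i, Qvalid (p i),
      forall i i', i != i' -> ~ Qeq (p i) (p i'),
      forall h, is_gal iota h -> forall i, exists i', Qeq (Qact j h (p i)) (p i')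
    & forall i, exists2 h, is_gal iota h & Qeq (Qact j h (p ord0)) (p i)].

(* The geometric components lie on pairwise distinct rulings:
   no two share a fibre of either projection. *)
Definition distinct_rulings (K : fieldType) (p : 'I_3 -> Qpt K) : Prop :=
  forall i i', i != i' -> ~ p1eq (p i).1 (p i').1 /\ ~ p1eq (p i).2 (p i').2.

(* Automorphisms of P^1_kbar x P^1_kbar: (x,y) |-> (xA, yB) or (x,y) |-> (yA, xB),
   with A, B in GL_2(kbar). *)
Record autP1P1 (K : fieldType) := AutP1P1 {
  aut_swap : bool; aut_A : 'M[K]_2; aut_B : 'M[K]_2 }.

Definition aut_valid (K : fieldType) (a : autP1P1 K) : Prop :=
  aut_A a \in unitmx /\ aut_B a \in unitmx.

Definition aut_apply (K : fieldType) (a : autP1P1 K) (p : Qpt K) : Qpt K :=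
  if aut_swap a then (p.2 *m aut_A a, p.1 *m aut_B a)
  else (p.1 *m aut_A a, p.2 *m aut_B a).

(* Aut_k(Q^L): automorphisms of Q^L_kbar = P^1 x P^1 commuting with the
   Galois action defining the k-structure Q^L (Galois descent). *)
Definition in_Aut_k_QL (k : fieldType) (L : fieldExtType k) (K : closedFieldType)
  (iota : {rmorphism k -> K}) (j : {rmorphism L -> K}) (a : autP1P1 K) : Prop :=
  aut_valid a /\
  forall h, is_gal iota h -> forall p, Qvalid p ->
    Qeq (Qact j h (aut_apply a p)) (aut_apply a (Qact j h p)).

(* On each ruling P^1 the components of p, and those of q, form a projective
   frame, so there are A, B in GL_2, unique up to scalars, sending the frame of
   p to that of q on the first and on the second factor.  A Galois element h
   permutes the p_i and the q_i by the same sigma, so h(A) and h(B) are again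
   frame maps from p to q, on the same factors or, when h is nontrivial on L,
   on swapped ones; by uniqueness they are proportional to A and B (or to B
   and A), which says that (A, B) commutes with the twisted Galois action. *)

From HB Require Import structures.
From mathcomp Require Import all_boot all_order all_algebra all_fingroup all_field.
From Stdlib Require Import ClassicalEpsilon.
Import GRing.Theory.
Local Open Scope ring_scope.

Section ProjectiveLine.
Set Implicit Arguments. Unset Strict Implicit.
Variable K : fieldType.
Implicit Types (x y : 'rV[K]_2) (u v : 'I_3 -> 'rV[K]_2) (A C : 'M[K]_2).

Lemma ord3_cases (i : 'I_3) : [\/ i = 0, i = 1 | i = 2].
Proof.
by case: i => [[|[|[|//]]] ?]; [constructor 1 | constructor 2 | constructor 3];
  apply: val_inj.
Qed.

Lemma p1eqZ x c : c != 0 -> p1eq x (c *: x).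
Proof. by exists c. Qed.

Lemma p1eqZ_nz x c : c *: x != 0 -> p1eq x (c *: x).
Proof. by rewrite scalemx_eq0 negb_or => /andP[nz_c _]; apply: p1eqZ. Qed.

Lemma p1eq_refl x : p1eq x x.
Proof. by exists 1; rewrite ?oner_neq0 ?scale1r. Qed.

Lemma p1eq_sym x y : p1eq x y -> p1eq y x.
Proof.
case=> c nz_c ->; exists c^-1; first by rewrite invr_eq0.
by rewrite scalerA mulVf // scale1r.
Qed.

Lemma p1eq_trans x y z : p1eq x y -> p1eq y z -> p1eq x z.
Proof.
case=> c nz_c -> [d nz_d ->]; exists (d * c); first by rewrite mulf_neq0.
by rewrite scalerA.
Qed.

Lemma p1eq_eq0 x y : p1eq x y -> (x == 0) = (y == 0).
Proof. by case=> c nz_c ->; rewrite scalemx_eq0 (negbTE nz_c). Qed.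

Lemma p1eq_mulmx x y A : p1eq x y -> p1eq (x *m A) (y *m A).
Proof. by case=> c nz_c ->; exists c; rewrite ?scalemxAl. Qed.

Lemma p1eq_mulmxZ x A d : d != 0 -> p1eq (x *m (d *: A)) (x *m A).
Proof. by move=> nz_d; rewrite -scalemxAr; apply/p1eq_sym/p1eqZ. Qed.

Lemma p1eq_map (h : {rmorphism K -> K}) x y :
  p1eq x y -> p1eq (map_mx h x) (map_mx h y).
Proof. by case=> c nz_c ->; exists (h c); rewrite ?fmorph_eq0 ?map_mxZ. Qed.

Definition p1_distinct x y := [/\ x != 0, y != 0 & ~ p1eq x y].

Lemma p1_distinct_eq x y x' y' :
  p1eq x x' -> p1eq y y' -> p1_distinct x y -> p1_distinct x' y'.
Proof.
move=> xx' yy' [nz_x nz_y not_xy]; split.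
- by rewrite -(p1eq_eq0 xx').
- by rewrite -(p1eq_eq0 yy').
- by move=> x'y'; apply/not_xy/(p1eq_trans xx')/(p1eq_trans x'y')/p1eq_sym.
Qed.

Lemma mul_row_col_scalar n a b (x y : 'rV[K]_n) :
  (row_mx a%:M b%:M : 'rV_(1 + 1)) *m col_mx x y = a *: x + b *: y.
Proof. by rewrite mul_row_col !mul_scalar_mx. Qed.

Lemma row2_scalar (r : 'rV[K]_(1 + 1)) : exists a b, r = row_mx a%:M b%:M.
Proof. by exists (lsubmx r 0 0), (rsubmx r 0 0); rewrite -!mx11_scalar hsubmxK. Qed.

Lemma col_mx_unit x y : p1_distinct x y -> (col_mx x y : 'M_2) \in unitmx.
Proof.
case=> nz_x nz_y not_xy; rewrite unitmxE unitfE; apply/negP => /det0P[r].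
have [a [b ->]] := row2_scalar r; rewrite mul_row_col_scalar => nz_ab /eqP.
rewrite addr_eq0 => /eqP ax_by.
have nz_b : b != 0.
  apply: contraNneq nz_ab => b0; move/eqP: ax_by.
  rewrite b0 scale0r oppr0 scalemx_eq0 (negbTE nz_x) orbF => /eqP->.
  by rewrite !raddf0 row_mx0.
have nz_a : a != 0.
  apply: contraNneq nz_y => a0; move/eqP: ax_by.
  by rewrite a0 scale0r eq_sym oppr_eq0 scalemx_eq0 (negbTE nz_b).
apply: not_xy; exists (- b^-1 * a); first by rewrite mulf_neq0 ?oppr_eq0 ?invr_eq0.
by rewrite -scalerA ax_by scalerN scaleNr opprK scalerA mulVf // scale1r.
Qed.

Lemma col_mx_coef x y a b c d : (col_mx x y : 'M_2) \in unitmx ->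
  a *: x + b *: y = c *: x + d *: y -> a = c /\ b = d.
Proof.
move=> xy_unit; rewrite -!mul_row_col_scalar.
move=> /(congr1 (mulmx^~ (invmx (col_mx x y : 'M_2)))); rewrite !mulmxK // => abcd.
have [/matrixP/(_ 0 0) + /matrixP/(_ 0 0)] := eq_row_mx (abcd : _ = _ :> 'rV_(1 + 1)).
by rewrite !mxE.
Qed.

Definition p1_frame u := forall i i', i != i' -> p1_distinct (u i) (u i').

Definition p1_maps A u v := forall i, p1eq (u i *m A) (v i).

Lemma p1_frame_eq u v : (forall i, p1eq (u i) (v i)) -> p1_frame u -> p1_frame v.
Proof. by move=> uv fu i i' /fu; apply: p1_distinct_eq. Qed.

Lemma p1_frame_coords u : p1_frame u ->
  exists a b, [/\ a != 0, b != 0 & u 2 = a *: u 0 + b *: u 1].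
Proof.
move=> fu; have [nz_u2 _ _] := fu 2 0 isT.
pose r := u 2 *m invmx (col_mx (u 0) (u 1) : 'M_2).
have [a [b r_ab]] := row2_scalar r.
have u2E : u 2 = a *: u 0 + b *: u 1.
  by rewrite -mul_row_col_scalar -r_ab mulmxKV //; apply/col_mx_unit/fu.
exists a, b; split=> //; apply/eqP => c0.
- have [_ _] := fu 1 2 isT; apply; move: nz_u2.
  by rewrite u2E c0 scale0r add0r; apply: p1eqZ_nz.
- have [_ _] := fu 0 2 isT; apply; move: nz_u2.
  by rewrite u2E c0 scale0r addr0; apply: p1eqZ_nz.
Qed.

Lemma p1_frame_transitive u v : p1_frame u -> p1_frame v ->
  exists2 A, A \in unitmx & p1_maps A u v.
Proof.
move=> fu fv.
have [a [b [nz_a nz_b u2E]]] := p1_frame_coords fu.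
have [a' [b' [nz_a' nz_b' v2E]]] := p1_frame_coords fv.
(* The rows of U and of V are scaled so that they add up to u 2 and to v 2. *)
pose U : 'M_2 := col_mx (a *: u 0) (b *: u 1).
pose V : 'M_2 := col_mx (a' *: v 0) (b' *: v 1).
have U_unit : U \in unitmx.
  by apply/col_mx_unit/(p1_distinct_eq (p1eqZ _ nz_a) (p1eqZ _ nz_b))/fu.
have V_unit : V \in unitmx.
  by apply/col_mx_unit/(p1_distinct_eq (p1eqZ _ nz_a') (p1eqZ _ nz_b'))/fv.
exists (invmx U *m V); first by rewrite unitmx_mul unitmx_inv U_unit.
have mapsE c d : (c *: (a *: u 0) + d *: (b *: u 1)) *m (invmx U *m V)
                 = c *: (a' *: v 0) + d *: (b' *: v 1).
  by rewrite -!mul_row_col_scalar mulmxA mulmxK.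
move=> i; case: (ord3_cases i) => ->.
- have := mapsE a^-1 0; rewrite !scale0r !addr0 !scalerA mulVf // scale1r => ->.
  by apply/p1eq_sym/p1eqZ; rewrite mulf_neq0 ?invr_eq0.
- have := mapsE 0 b^-1; rewrite !scale0r !add0r !scalerA mulVf // scale1r => ->.
  by apply/p1eq_sym/p1eqZ; rewrite mulf_neq0 ?invr_eq0.
- by have := mapsE 1 1; rewrite !scale1r -u2E -v2E => ->; apply: p1eq_refl.
Qed.

Lemma p1_maps_uniq u v A C : p1_frame u -> p1_frame v ->
  p1_maps A u v -> p1_maps C u v -> exists2 d, d != 0 & C = d *: A.
Proof.
move=> fu fv hA hC.
have ratio i : p1eq (u i *m A) (u i *m C) := p1eq_trans (hA i) (p1eq_sym (hC i)).
have [d0 nz_d0 e0] := ratio 0; have [d1 nz_d1 e1] := ratio 1.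
have [d2 nz_d2 e2] := ratio 2.
have [a [b [nz_a nz_b u2E]]] := p1_frame_coords fu.
have uA_unit : (col_mx (u 0 *m A) (u 1 *m A) : 'M_2) \in unitmx.
  exact/col_mx_unit/(p1_frame_eq (fun i => p1eq_sym (hA i)) fv).
have [d0E d1E] : a * d0 = d2 * a /\ b * d1 = d2 * b.
  apply: col_mx_coef uA_unit _.
  rewrite -!scalerA -e0 -e1 !scalemxAl -mulmxDl -u2E e2 u2E.
  by rewrite mulmxDl scalerDr -!scalemxAl !scalerA.
have U_unit : (col_mx (u 0) (u 1) : 'M_2) \in unitmx by apply/col_mx_unit/fu.
have d02 : d0 = d2 by apply: (mulfI nz_a); rewrite d0E mulrC.
have d12 : d1 = d2 by apply: (mulfI nz_b); rewrite d1E mulrC.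
have UC : col_mx (u 0) (u 1) *m C = d2 *: (col_mx (u 0) (u 1) *m A).
  by rewrite !mul_col_mx e0 e1 d02 d12 scale_col_mx.
by exists d2 => //; apply: (can_inj (mulKmx U_unit)); rewrite -scalemxAr.
Qed.

Lemma map_p1_maps (h : {rmorphism K -> K}) (s : 'S_3) u v u' v' A A' :
  p1_frame u' -> p1_frame v' -> p1_maps A u v -> p1_maps A' u' v' ->
  (forall i, p1eq (map_mx h (u i)) (u' (s i))) ->
  (forall i, p1eq (map_mx h (v i)) (v' (s i))) ->
  exists2 d, d != 0 & map_mx h A = d *: A'.
Proof.
move=> fu' fv' hA hA' hu hv; apply: p1_maps_uniq fu' fv' hA' _ => i.
rewrite -(permKV s i); set k := (s^-1)%g i.
apply: p1eq_trans (p1eq_mulmx _ (p1eq_sym (hu k))) _.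
by rewrite -map_mxM; apply: p1eq_trans (p1eq_map h (hA k)) (hv k).
Qed.

Lemma distinct_rulings_frames (p : 'I_3 -> Qpt K) :
  (forall i, Qvalid (p i)) -> distinct_rulings p ->
  p1_frame (fun i => (p i).1) /\ p1_frame (fun i => (p i).2).
Proof.
move=> valid rulings; split=> i i' /rulings[not_eq1 not_eq2].
- by have [? _] := valid i; have [? _] := valid i'.
- by have [_ ?] := valid i; have [_ ?] := valid i'.
Qed.

End ProjectiveLine.

Theorem lemma3p7
  (k : fieldType) (Hperf : perfect_field k)
  (K : closedFieldType) (iota : {rmorphism k -> K})
  (Halg : algebraic_over iota)
  (L : fieldExtType k) (HL2 : \dim {:L} = 2%N)
  (j : {rmorphism L -> K}) (Hj : forall c : k, j (c%:A) = iota c)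
  (p q : 'I_3 -> Qpt K)
  (Hp : deg3_point iota j p) (Hq : deg3_point iota j q)
  (Hsym : forall h : {rmorphism K -> K}, is_gal iota h ->
     exists s : 'S_3, forall i : 'I_3,
       Qeq (Qact j h (p i)) (p (s i)) /\ Qeq (Qact j h (q i)) (q (s i)))
  (Hrp : distinct_rulings p) (Hrq : distinct_rulings q) :
  exists a : autP1P1 K, in_Aut_k_QL iota j a /\
    forall i : 'I_3, Qeq (aut_apply a (p i)) (q i).
Proof.
have [[validp _ _ _] [validq _ _ _]] := (Hp, Hq).
have [fp1 fp2] := distinct_rulings_frames validp Hrp.
have [fq1 fq2] := distinct_rulings_frames validq Hrq.
have [A A_unit hA] := p1_frame_transitive fp1 fq1.
have [B B_unit hB] := p1_frame_transitive fp2 fq2.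
exists (AutP1P1 false A B); split=> [|i]; last by split; [apply: hA | apply: hB].
split=> [//|h gal_h P _]; have [s hs] := Hsym h gal_h.
move: hs; rewrite /Qact /aut_apply /=.
case: excluded_middle_informative => ? hs; rewrite /= !map_mxM.
- have [d nz_d ->] := map_p1_maps fp1 fq1 hA hA (fun i => (hs i).1.1) (fun i => (hs i).2.1).
  have [e nz_e ->] := map_p1_maps fp2 fq2 hB hB (fun i => (hs i).1.2) (fun i => (hs i).2.2).
  by split; apply: p1eq_mulmxZ.
- (* h swaps the rulings, so h(B) sends the first frame of p to that of q. *)
  have [d nz_d ->] := map_p1_maps fp1 fq1 hB hA (fun i => (hs i).1.1) (fun i => (hs i).2.1).
  have [e nz_e ->] := map_p1_maps fp2 fq2 hA hB (fun i => (hs i).1.2) (fun i => (hs i).2.2).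
  by split; apply: p1eq_mulmxZ.
Qed.
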